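(* Let $\bm A=(A_1,\dots,A_d)$ be Hermitian matrices in $M_n(\mathbb{C})$, $B\in M_n(\mathbb{C})$, and $(\bm\lambda,\nu)\in\mathbb{R}^d\times\mathbb{C}$. Then $$\left|\bar\mu^{C}_{(\bm\lambda,\nu)}(\bm A,B)-\dot\mu^{C}_{(\bm\lambda,\nu)}(\bm A,B)\right|\le\sqrt N\,\big\|(B-\nu I)-(B-\nu I)^\dagger\big\|+\Delta\big(L_{(\bm\lambda,\nu)}(\bm A,B)\big),$$ where $N=2mn$ is the size of $L_{(\bm\lambda,\nu)}(\bm A,B)$.
   Context: Let $n,d,m$ be positive integers. Fix Hermitian matrices $\Gamma_1,\dots,\Gamma_d\in M_{2m}(\mathbb{C})$ with $\Gamma_i^2=I_{2m}$ and $\Gamma_i\Gamma_j=-\Gamma_j\Gamma_i$ for $i\neq j$ (a Clifford representation; the paper uses a specific one built from Pauli matrices). Write $P=\begin{bmatrix} I_m&0\\0&0_m\end{bmatrix}$ and $Q=\begin{bmatrix}0_m&0\\0&I_m\end{bmatrix}$ in $M_{2m}(\mathbb{C})$. For a $d$-tuple $\bm A=(A_1,\dots,A_d)$ of Hermitian matrices in $M_n(\mathbb{C})$, a matrix $B\in M_n(\mathbb{C})$ (not necessarily Hermitian or normal), and a probe site $(\bm\lambda,\nu)\in\mathbb{R}^d\times\mathbb{C}$, the non-Hermitian spectral localizer is $$L_{(\bm\lambda,\nu)}(\bm A,B)=\sum_{i=1}^d (A_i-\lambda_i I)\otimes\Gamma_i+(B-\nu I)\otimes P-(B-\nu I)^\dagger\otimes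 Q\in M_{2mn}(\mathbb{C}).$$ The Clifford radial gap is $\dot\mu^{C}_{(\bm\lambda,\nu)}(\bm A,B)=\sigma_{\min}\big(L_{(\bm\lambda,\nu)}(\bm A,B)\big)$ and the Clifford linear gap is $\bar\mu^{C}_{(\bm\lambda,\nu)}(\bm A,B)=\min\{|\mathrm{Re}(z)|:z\in\mathrm{Spec}(L_{(\bm\lambda,\nu)}(\bm A,B))\}$. For a square matrix $M$, its deviation from normality is $\Delta(M)=\inf\{\|U\|: M=W(D+U)W^\dagger\text{ a Schur decomposition, } W\text{ unitary}, D\text{ diagonal}, U\text{ strictly upper triangular}\}$. Matrix norms are operator norms. *)

From mathcomp Require Import all_boot all_order all_algebra.
From mathcomp Require Import sesquilinear spectral.
From mathcomp Require Import classical_sets reals.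
From mathcomp.real_closed Require Import complex mxtens.
Set Implicit Arguments. Unset Strict Implicit. Unset Printing Implicit Defensive.
Import Order.TTheory GRing.Theory Num.Theory.
Local Open Scope ring_scope.
Local Open Scope sesquilinear_scope.
Local Open Scope classical_set_scope.
Local Open Scope complex_scope.
Local Open Scope ring_scope.
Local Open Scope sesquilinear_scope.

Section Defs.
Variable R : realType.
Local Notation C := R[i].

Definition adj (p q : nat) (M : 'M[C]_(p, q)) : 'M[C]_(q, p) := M ^t*.

Definition is_hermitian (p : nat) (M : 'M[C]_p) : Prop := adj M = M.
Definition unitary (p : nat) (W : 'M[C]_p) : Prop := W \is unitarymx.
Definition diagonal (p : nat) (D : 'M[C]_p) : Prop :=
  forall i j : 'I_p, i != j -> D i j = 0.
Definition strictly_upper (p : nat) (U : 'M[C]_p) : Prop :=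
  forall i j : 'I_p, (j <= i)%N -> U i j = 0.

Definition vnorm (p : nat) (x : 'cV[C]_p) : R :=
  Num.sqrt (\sum_(i < p) complex.Re (`|x i 0| ^+ 2)).

Definition opnorm (p q : nat) (M : 'M[C]_(p, q)) : R :=
  sup [set vnorm (M *m x) | x in [set x : 'cV[C]_q | vnorm x <= 1]].

Definition sigma_min (p : nat) (M : 'M[C]_p) : R :=
  inf [set Num.sqrt (complex.Re z) | z in [set z : C | eigenvalue (adj M *m M) z]].

Definition min_abs_re_spec (p : nat) (M : 'M[C]_p) : R :=
  inf [set `|complex.Re z| | z in [set z : C | eigenvalue M z]].

Definition dev_normality (p : nat) (M : 'M[C]_p) : R :=
  inf [set opnorm U | U in [set U : 'M[C]_p | exists (W D : 'M[C]_p),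
        [/\ unitary W, diagonal D, strictly_upper U & M = W *m (D + U) *m adj W]]].

Definition clifford_rep (d m : nat) (G : 'I_d -> 'M[C]_(m + m)) : Prop :=
  (forall i, is_hermitian (G i)) /\ (forall i, G i *m G i = 1%:M) /\
  (forall i j, i != j -> G i *m G j = - (G j *m G i)).

Definition projP (m : nat) : 'M[C]_(m + m) := block_mx 1%:M 0 0 0.
Definition projQ (m : nat) : 'M[C]_(m + m) := block_mx 0 0 0 1%:M.

Definition localizer (d m n : nat) (G : 'I_d -> 'M[C]_(m + m))
  (A : 'I_d -> 'M[C]_n) (B : 'M[C]_n) (lam : 'I_d -> R) (nu : C)
  : 'M[C]_(n * (m + m)) :=
  \sum_(i < d) ((A i - (lam i)%:C%:M) *t G i)
  + ((B - nu%:M) *t projP m) - (adj (B - nu%:M) *t projQ m).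

Definition clifford_radial_gap d m n G A B lam nu : R :=
  sigma_min (@localizer d m n G A B lam nu).
Definition clifford_linear_gap d m n G A B lam nu : R :=
  min_abs_re_spec (@localizer d m n G A B lam nu).

End Defs.

From Pilot Require Import Defs.
From mathcomp Require Import all_boot all_order all_algebra.
From mathcomp Require Import sesquilinear spectral.
From mathcomp Require Import classical_sets reals.
From mathcomp.real_closed Require Import complex mxtens.
From mathcomp Require Import ring lra.
Import Order.TTheory GRing.Theory Num.Theory.
Local Open Scope ring_scope.

(* Write L for the localizer, a for its linear gap and b for its radial gap.
   The anti-Hermitian part L - L^+ is ((B - nu) - (B - nu)^+) (x) I, whose norm is
   at most c = sqrt N * ||(B - nu) - (B - nu)^+||.  For an eigenpair L x = z x this
   gives 2 |Im z| ||x||^2 = |<x, (L - L^+) x>| <= c ||x||^2, and since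
   b <= |z| <= |Re z| + |Im z| for every eigenvalue z (Rayleigh quotient of L^+ L),
   b <= a + c.  Conversely, for a Schur form L = W (D + U) W^+ the diagonal
   entries of D are eigenvalues of L, so a <= min_k |D_kk|, while
   ||L x|| >= ||D W^+ x|| - ||U W^+ x|| >= (min_k |D_kk| - ||U||) ||x||; hence
   a <= b + ||U||, and a <= b + Delta(L) in the infimum over Schur forms. *)

Set Implicit Arguments. Unset Strict Implicit. Unset Printing Implicit Defensive.

Section SpectralLocalizer.
Variable R : realType.
Local Notation C := R[i].
Local Notation normc := (@Normc.normc R).
Local Notation Re := (@complex.Re R).
Local Notation Im := (@complex.Im R).
Local Open Scope complex_scope.
Local Open Scope ring_scope.
Local Open Scope sesquilinear_scope.
Local Open Scope classical_set_scope.

Lemma normcE (c : C) : `|c| = (normc c)%:C. Proof. by []. Qed.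

Lemma normc_ge0 (c : C) : 0 <= normc c.
Proof. by case: c => a b; rewrite /= sqrtr_ge0. Qed.

Lemma normc_real (r : R) : normc r%:C = `|r|.
Proof. by rewrite /= expr0n /= addr0 sqrtr_sqr. Qed.

Lemma normc_sum (I : finType) (F : I -> C) : normc (\sum_i F i) <= \sum_i normc (F i).
Proof. by rewrite -lecR -normcE rmorph_sum; exact: ler_norm_sum. Qed.

Lemma ReD (c d : C) : Re (c + d) = Re c + Re d. Proof. by case: c; case: d. Qed.

Lemma Re_sum (I : finType) (F : I -> C) : Re (\sum_i F i) = \sum_i Re (F i).
Proof. exact: (big_morph Re ReD). Qed.

Lemma ReMr (c : C) (r : R) : Re (c * r%:C) = Re c * r.
Proof. by case: c => a b /=; rewrite mulr0 subr0. Qed.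

Lemma Re_conjC (c : C) : Re c^* = Re c. Proof. by case: c. Qed.

Lemma Re_le_normc (c : C) : `|Re c| <= normc c.
Proof.
case: c => a b /=; rewrite -sqrtr_sqr ler_sqrt ?addr_ge0 ?sqr_ge0 //.
by rewrite lerDl sqr_ge0.
Qed.

Lemma normc_le_Re_Im (c : C) : normc c <= `|Re c| + `|Im c|.
Proof.
case: c => a b /=; rewrite -ler_sqr ?nnegrE ?sqrtr_ge0 ?addr_ge0 //.
rewrite sqr_sqrtr ?addr_ge0 ?sqr_ge0 // sqrrD !real_normK ?num_real //.
by rewrite lerD2r lerDl mulrn_wge0 // mulr_ge0.
Qed.

Lemma mul_conjC_normc (c : C) : c^* * c = (normc c ^+ 2)%:C.
Proof. by rewrite mulrC -normCK normcE rmorphXn. Qed.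

Lemma normc_subr_conjC (c : C) : normc (c - c^*) = 2 * `|Im c|.
Proof.
case: c => a b /=.
by rewrite subrr expr0n /= add0r opprK sqrtr_sqr -mulr2n normrMn mulr_natl.
Qed.

(** * Euclidean and operator norms *)

Lemma sqrtC_real (r : R) : 0 <= r -> sqrtC r%:C = (Num.sqrt r)%:C.
Proof.
move=> r0; rewrite -{1}(sqr_sqrtr r0) rmorphXn sqrCK //.
by rewrite ler0c sqrtr_ge0.
Qed.

Definition cvdot p (x y : 'cV[C]_p) : C := (x ^t* *m y) 0 0.

Lemma cvdotE p (x y : 'cV[C]_p) : cvdot x y = \sum_i (x i 0)^* * y i 0.
Proof. by rewrite /cvdot !mxE; apply: eq_bigr => i _; rewrite !mxE. Qed.

Lemma cvdot_dotmx p (x y : 'cV[C]_p) : cvdot x y = dotmx y^T x^T.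
Proof. by rewrite dotmxE cvdotE !mxE; apply: eq_bigr => i _; rewrite !mxE mulrC. Qed.

Lemma cvdotC p (x y : 'cV[C]_p) : cvdot y x = (cvdot x y)^*.
Proof.
rewrite !cvdotE rmorph_sum; apply: eq_bigr => i _.
by rewrite rmorphM /= conjCK mulrC.
Qed.

Lemma cvdotZr p a (x y : 'cV[C]_p) : cvdot x (a *: y) = a * cvdot x y.
Proof. by rewrite /cvdot -scalemxAr mxE. Qed.

Lemma cvdotZl p a (x y : 'cV[C]_p) : cvdot (a *: x) y = a^* * cvdot x y.
Proof. by rewrite cvdotC cvdotZr rmorphM /= -cvdotC. Qed.

Lemma cvdotBr p (x y z : 'cV[C]_p) : cvdot x (y - z) = cvdot x y - cvdot x z.
Proof. by rewrite /cvdot mulmxBr !mxE. Qed.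

Lemma cvdot_mulmx p q (x : 'cV[C]_p) (M : 'M[C]_(p, q)) (y : 'cV[C]_q) :
  cvdot x (M *m y) = cvdot (M ^t* *m x) y.
Proof. by rewrite /cvdot trmx_mul map_mxM trmxCK mulmxA. Qed.

Lemma vnorm_sqrE p (x : 'cV[C]_p) : vnorm x ^+ 2 = \sum_i normc (x i 0) ^+ 2.
Proof.
have normc2 i : Re (`|x i 0| ^+ 2) = normc (x i 0) ^+ 2 by rewrite normcE -rmorphXn.
rewrite /vnorm sqr_sqrtr; first by apply: eq_bigr => i _; rewrite normc2.
by apply: sumr_ge0 => i _; rewrite normc2 sqr_ge0.
Qed.

Lemma vnorm_ge0 p (x : 'cV[C]_p) : 0 <= vnorm x.
Proof. exact: sqrtr_ge0. Qed.

Lemma cvdotvv p (x : 'cV[C]_p) : cvdot x x = (vnorm x ^+ 2)%:C.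
Proof.
rewrite cvdotE vnorm_sqrE rmorph_sum; apply: eq_bigr => i _.
by rewrite mul_conjC_normc.
Qed.

Lemma vnormC_sqrt p (x : 'cV[C]_p) : (vnorm x)%:C = sqrtC (dotmx x^T x^T).
Proof.
by rewrite -cvdot_dotmx cvdotvv sqrtC_real ?sqr_ge0 // sqrtr_sqr ger0_norm ?vnorm_ge0.
Qed.

Lemma vnorm_gt0 p (x : 'cV[C]_p) : (0 < vnorm x) = (x != 0).
Proof.
rewrite -ltcR vnormC_sqrt (sqrt_dnorm_gt0 (@dotmx C p)).
by rewrite (can2_eq (@trmxK _ _ _) (@trmxK _ _ _)) trmx0.
Qed.

Lemma normc_cvdot_le p (x y : 'cV[C]_p) : normc (cvdot x y) <= vnorm x * vnorm y.
Proof.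
rewrite -lecR -normcE rmorphM /= mulrC !vnormC_sqrt cvdot_dotmx.
exact: (CauchySchwarz_sqrt (@dotmx C p)).
Qed.

Lemma vnormD p (x y : 'cV[C]_p) : vnorm (x + y) <= vnorm x + vnorm y.
Proof.
rewrite -lecR rmorphD /= !vnormC_sqrt linearD.
exact: (triangle_lerif (@dotmx C p) _ _).
Qed.

Lemma vnormZ p (a : C) (x : 'cV[C]_p) : vnorm (a *: x) = normc a * vnorm x.
Proof.
apply: (pexpIrn (isT : 0 < 2)%N); rewrite ?nnegrE ?mulr_ge0 ?vnorm_ge0 ?normc_ge0 //.
rewrite exprMn !vnorm_sqrE mulr_sumr.
by apply: eq_bigr => i _; rewrite mxE Normc.normcM exprMn.
Qed.

Lemma vnormN p (x : 'cV[C]_p) : vnorm (- x) = vnorm x.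
Proof. by rewrite -scaleN1r vnormZ -(rmorphN1 (real_complex R)) normc_real normrN1 mul1r. Qed.

Lemma vnorm0 p : vnorm (0 : 'cV[C]_p) = 0.
Proof. by rewrite /vnorm big1 ?sqrtr0 // => i _; rewrite mxE normr0 expr0n. Qed.

Lemma vnorm_isometry p q (U : 'M[C]_(p, q)) (x : 'cV[C]_q) :
  U ^t* *m U = 1%:M -> vnorm (U *m x) = vnorm x.
Proof.
move=> UtU; apply: (pexpIrn (isT : 0 < 2)%N); rewrite ?nnegrE ?vnorm_ge0 //.
by apply: complexI; rewrite -!cvdotvv cvdot_mulmx mulmxA UtU mul1mx.
Qed.

Lemma normc_entry_le_vnorm p (x : 'cV[C]_p) i : normc (x i 0) <= vnorm x.
Proof.
rewrite -ler_sqr ?nnegrE ?normc_ge0 ?vnorm_ge0 // vnorm_sqrE (bigD1 i) //=.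
by rewrite lerDl sumr_ge0 // => j _; rewrite sqr_ge0.
Qed.

Lemma vnorm_le_entrywise p (x : 'cV[C]_p) (c : R) : 0 <= c ->
  (forall i, normc (x i 0) <= c) -> vnorm x <= Num.sqrt p%:R * c.
Proof.
move=> c0 xc; rewrite -ler_sqr ?nnegrE ?vnorm_ge0 ?mulr_ge0 ?sqrtr_ge0 //.
rewrite vnorm_sqrE exprMn sqr_sqrtr // mulr_natl -[p in _ *+ p]card_ord -sumr_const.
by apply: ler_sum => i _; rewrite ler_sqr ?nnegrE ?normc_ge0.
Qed.

Lemma opnorm_has_ubound p q (M : 'M[C]_(p, q)) :
  has_ubound [set vnorm (M *m x) | x in [set x : 'cV[C]_q | vnorm x <= 1]].
Proof.
have entry_ge0 i j : 0 <= normc (M i j) by exact: normc_ge0.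
exists (Num.sqrt p%:R * \sum_i \sum_j normc (M i j)) => _ [x /= x_le1 <-].
apply: vnorm_le_entrywise => [|i]; first by do 2!apply: sumr_ge0 => ? _.
rewrite mxE; apply: le_trans (normc_sum _) _.
apply: (@le_trans _ _ (\sum_j normc (M i j))).
  apply: ler_sum => j _; rewrite Normc.normcM -[X in _ <= X]mulr1 ler_wpM2l //.
  exact: le_trans (normc_entry_le_vnorm x j) x_le1.
by rewrite (bigD1 i) //= lerDl; do 2!apply: sumr_ge0 => ? _.
Qed.

Lemma opnorm_ge0 p q (M : 'M[C]_(p, q)) : 0 <= opnorm M.
Proof.
apply: (ub_le_sup (opnorm_has_ubound M)).
by exists 0; rewrite /= ?mulmx0 vnorm0 ?ler01.
Qed.

Lemma vnorm_mulmx_le p q (M : 'M[C]_(p, q)) (x : 'cV[C]_q) :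
  vnorm (M *m x) <= opnorm M * vnorm x.
Proof.
have [->|x_neq0] := eqVneq x 0; first by rewrite mulmx0 !vnorm0 mulr0.
have x_gt0 : 0 < vnorm x by rewrite vnorm_gt0.
have invx_ge0 : 0 <= (vnorm x)^-1 by rewrite invr_ge0 vnorm_ge0.
set y := (vnorm x)^-1%:C *: x.
have y1 : vnorm y = 1 by rewrite vnormZ normc_real ger0_norm // mulVf ?gt_eqF.
have : vnorm (M *m y) <= opnorm M.
  by apply: (ub_le_sup (opnorm_has_ubound M)); exists y; rewrite /= ?y1.
by rewrite -scalemxAr vnormZ normc_real ger0_norm // mulrC ler_pdivrMr.
Qed.

(** * Eigenvalues and Schur forms *)

Lemma eigenvalueE p (M : 'M[C]_p) a : eigenvalue M a = (\det (M - a%:M) == 0).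
Proof.
by rewrite /eigenvalue /eigenspace kermx_eq0 row_free_unit unitmxE unitfE negbK.
Qed.

Lemma eigenvalue_tr p (M : 'M[C]_p) a : eigenvalue M^T a = eigenvalue M a.
Proof. by rewrite !eigenvalueE -det_tr linearB /= trmxK tr_scalar_mx. Qed.

Lemma eigenvalue_col p (M : 'M[C]_p) a : eigenvalue M a ->
  exists2 x : 'cV[C]_p, M *m x = a *: x & x != 0.
Proof.
rewrite -eigenvalue_tr => /eigenvalueP [v Mv v_neq0].
exists v^T; last by rewrite (can2_eq (@trmxK _ _ _) (@trmxK _ _ _)) trmx0.
by rewrite -[M]trmxK -trmx_mul Mv linearZ.
Qed.

Lemma unitarymx_tC p (P : 'M[C]_p) : P \is unitarymx -> P ^t* *m P = 1%:M.
Proof. by move=> /unitarymxP PPt; apply: mulmx1C. Qed.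

Lemma adj_mulmx_self p q (L : 'M[C]_(p, q)) : (L ^t* *m L) ^t* = L ^t* *m L.
Proof. by rewrite trmx_mul map_mxM trmxCK. Qed.

Lemma eigenvalue_adj_mulmx p (L : 'M[C]_p) w : eigenvalue (L ^t* *m L) w ->
  exists2 x : 'cV[C]_p, vnorm (L *m x) ^+ 2 = Re w * vnorm x ^+ 2 & x != 0.
Proof.
move=> /eigenvalueP [v LLv v_neq0]; exists (v ^t*); last first.
  by apply: contra v_neq0 => /eqP v0; rewrite -[v]trmxCK v0 linear0 /= map_mx0.
have LLvt : (L ^t* *m L) *m v ^t* = w^* *: v ^t*.
  by rewrite -{1}adj_mulmx_self -map_mxM -trmx_mul LLv linearZ /= map_mxZ.
have := congr1 (cvdot (v ^t*)) LLvt.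
rewrite cvdotZr cvdotvv -mulmxA cvdot_mulmx trmxCK cvdotvv.
by move=> /(congr1 Re); rewrite ReMr Re_conjC.
Qed.

Lemma min_eigenvalue_adj_mulmx p (L : 'M[C]_p) : (0 < p)%N ->
  exists2 w, eigenvalue (L ^t* *m L) w &
    forall x : 'cV[C]_p, Re w * vnorm x ^+ 2 <= vnorm (L *m x) ^+ 2.
Proof.
move=> p_gt0; set M := L ^t* *m L.
have /orthomx_spectralP M_spec : M \is normalmx.
  by apply/normalmxP; rewrite /M adj_mulmx_self.
set P := spectralmx M in M_spec; set s := spectral_diag M in M_spec.
have P_unitary : P \is unitarymx by apply: spectral_unitarymx.
rewrite invmx_unitary // in M_spec.
have PPt : P *m P ^t* = 1%:M by apply/unitarymxP.
have PtP := unitarymx_tC P_unitary.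
have [k _ k_min] := @arg_minP _ _ _ (Ordinal p_gt0) xpredT (fun k => Re (s 0 k)) isT.
exists (s 0 k).
  apply/eigenvalueP; exists (row k P).
    rewrite M_spec !mulmxA -row_mul PPt -!row_mul mul1mx mul_diag_mx.
    by apply/rowP => j; rewrite !mxE.
  apply/eqP => Pk0; have := congr1 (fun r => (r *m P ^t*) 0 k) Pk0.
  by rewrite -row_mul PPt mul0mx !mxE eqxx /= => /eqP; rewrite oner_eq0.
move=> x; set y := P *m x.
have Mx : cvdot x (M *m x) = (vnorm (L *m x) ^+ 2)%:C.
  by rewrite /M -mulmxA cvdot_mulmx trmxCK cvdotvv.
have Mx_diag : cvdot x (M *m x) = \sum_i s 0 i * (normc (y i 0) ^+ 2)%:C.
  rewrite {1}M_spec -!mulmxA cvdot_mulmx trmxCK cvdotE; apply: eq_bigr => i _.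
  by rewrite mul_diag_mx [X in _ * X]mxE mulrCA mul_conjC_normc.
have := congr1 Re Mx_diag; rewrite Mx Re_sum /= => ->.
rewrite -(vnorm_isometry x PtP) vnorm_sqrE mulr_sumr; apply: ler_sum => i _.
by rewrite ReMr ler_wpM2r ?sqr_ge0 ?k_min.
Qed.

Lemma diagonal_min_entry p (D : 'M[C]_p) : (0 < p)%N -> Defs.diagonal D ->
  exists k, forall y : 'cV[C]_p, normc (D k k) * vnorm y <= vnorm (D *m y).
Proof.
move=> p_gt0 D_diag.
have [k _ k_min] := @arg_minP _ _ _ (Ordinal p_gt0) xpredT (fun k => normc (D k k)) isT.
exists k => y; rewrite -ler_sqr ?nnegrE ?mulr_ge0 ?normc_ge0 ?vnorm_ge0 //.
rewrite exprMn !vnorm_sqrE mulr_sumr; apply: ler_sum => i _.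
have -> : (D *m y) i 0 = D i i * y i 0.
  by rewrite mxE (bigD1 i) //= big1 ?addr0 // => j ji; rewrite D_diag ?mul0r // eq_sym.
by rewrite Normc.normcM exprMn ler_wpM2r ?sqr_ge0 // ler_sqr ?nnegrE ?normc_ge0 ?k_min.
Qed.

Lemma eigenvalue_conj_upper_trig p (W T : 'M[C]_p) (k : 'I_p) : W \is unitarymx ->
  (forall i j : 'I_p, (j < i)%N -> T i j = 0) ->
  eigenvalue (W *m T *m W ^t*) (T k k).
Proof.
move=> W_unitary T_trig; rewrite eigenvalueE.
have -> : W *m T *m W ^t* - (T k k)%:M = W *m (T - (T k k)%:M) *m W ^t*.
  by rewrite mulmxBr mulmxBl mul_mx_scalar -scalemxAl (unitarymxP W_unitary) scalemx1.
have trig : is_trig_mx (T - (T k k)%:M)^T.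
  apply/is_trig_mxP => i j ij; rewrite !mxE (T_trig j i ij).
  by rewrite -val_eqE /= (gtn_eqF ij) mulr0n subr0.
rewrite !det_mulmx -(det_tr (T - _)) (det_trig trig).
rewrite (bigD1 k) //= !mxE eqxx mulr1n subrr.
by rewrite mul0r mulr0 mul0r.
Qed.

Lemma exists_schur_decomposition p (L : 'M[C]_p) : (0 < p)%N -> exists U W D,
  [/\ Defs.unitary W, Defs.diagonal D, strictly_upper U & L = W *m (D + U) *m adj W].
Proof.
move=> p_gt0; have [P P_unitary] := Schur (L ^t*) p_gt0.
rewrite /similar_to /conjmx pinvmx_unitary //.
set T0 := P *m L ^t* *m P ^t*; have T0_def : T0 = P *m L ^t* *m P ^t* by [].
clearbody T0 => /is_trig_mxP T0_trig; set T := T0 ^t*.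
exists (\matrix_(i, j) if (i < j)%N then T i j else 0), (P ^t*).
exists (\matrix_(i, j) if i == j then T i j else 0); split.
- by rewrite /Defs.unitary trmxC_unitary.
- by move=> i j ij; rewrite mxE (negPf ij).
- by move=> i j ji; rewrite mxE ltnNge ji.
have -> : (\matrix_(i, j) (if i == j then T i j else 0)) +
          (\matrix_(i, j) (if (i < j)%N then T i j else 0)) = T.
  apply/matrixP => i j; rewrite !mxE; case: (ltngtP i j) => [ij|ji|/val_inj ->].
  - by rewrite -val_eqE /= (ltn_eqF ij) add0r.
  - by rewrite -val_eqE /= (gtn_eqF ji) add0r T0_trig // conjC0.
  - by rewrite eqxx addr0.
have PtP := unitarymx_tC P_unitary.
rewrite /adj trmxCK /T T0_def !trmx_mul !map_mxM !trmxCK !mulmxA PtP mul1mx.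
by rewrite -mulmxA PtP mulmx1.
Qed.

Lemma Im_eigenvalue_le p (L : 'M[C]_p) z c : eigenvalue L z ->
  (forall y, vnorm ((L - L ^t*) *m y) <= c * vnorm y) -> 2 * `|Im z| <= c.
Proof.
move=> /eigenvalue_col [x Lx x_neq0] skew_le.
have x_gt0 : 0 < vnorm x ^+ 2 by rewrite exprn_gt0 // vnorm_gt0.
have skew_x : cvdot x ((L - L ^t*) *m x) = (z - z^*) * (vnorm x ^+ 2)%:C.
  rewrite mulmxBl cvdotBr Lx cvdotZr cvdot_mulmx trmxCK Lx cvdotZl cvdotvv.
  by rewrite mulrBl.
have := normc_cvdot_le x ((L - L ^t*) *m x).
rewrite skew_x Normc.normcM normc_subr_conjC normc_real (ger0_norm (sqr_ge0 _)).
move/le_trans/(_ (ler_wpM2l (vnorm_ge0 x) (skew_le x))).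
by rewrite [X in _ <= X -> _]mulrCA -expr2 ler_pM2r.
Qed.

(** * The anti-Hermitian part of the localizer *)

Lemma big_mxtens_index (V : nmodType) p q (F : 'I_(p * q) -> V) :
  \sum_k F k = \sum_(i < p) \sum_(j < q) F (mxtens_index (i, j)).
Proof.
rewrite (reindex (@mxtens_index p q)) /=; first by rewrite pair_big; apply: eq_bigr => -[].
exact: onW_bij (Bijective (@mxtens_indexK p q) (@mxtens_unindexK p q)).
Qed.

(* Each entry of (X (x) I) x is an entry of X applied to a slice of x; bounding
   the p * q entries one by one is what costs the factor sqrt N. *)
Lemma vnorm_tensmx1_le p n q (X : 'M[C]_(p, n)) (x : 'cV[C]_(n * q)) :
  vnorm ((X *t (1%:M : 'M_q)) *m x) <= Num.sqrt (p * q)%:R * (opnorm X * vnorm x).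
Proof.
apply: vnorm_le_entrywise; first by rewrite mulr_ge0 ?opnorm_ge0 ?vnorm_ge0.
move=> k; case: (mxtens_indexP k) => i b.
pose xb : 'cV[C]_n := \col_j x (mxtens_index (j, b)) 0.
have -> : ((X *t (1%:M : 'M_q)) *m x) (mxtens_index (i, b)) 0 = (X *m xb) i 0.
  rewrite !mxE big_mxtens_index; apply: eq_bigr => j _.
  rewrite (bigD1 b) //= big1 ?addr0 => [|c cb]; first by rewrite tensmxE !mxE eqxx mulr1.
  by rewrite tensmxE !mxE eq_sym (negPf cb) mulr0 mul0r.
apply: le_trans (normc_entry_le_vnorm _ i) _.
apply: le_trans (vnorm_mulmx_le _ _) _; rewrite ler_wpM2l ?opnorm_ge0 //.
rewrite -ler_sqr ?nnegrE ?vnorm_ge0 // !vnorm_sqrE big_mxtens_index.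
apply: ler_sum => j _; rewrite (bigD1 b) //= mxE lerDl.
by apply: sumr_ge0 => c _; rewrite sqr_ge0.
Qed.

Lemma adj_tensmx p q r s (M : 'M[C]_(p, q)) (N : 'M[C]_(r, s)) :
  (M *t N) ^t* = M ^t* *t N ^t*.
Proof. by apply/matrixP => i j; rewrite !mxE rmorphM. Qed.

Lemma hermitian_subr_real_scalar p (M : 'M[C]_p) (r : R) :
  is_hermitian M -> is_hermitian (M - r%:C%:M).
Proof.
rewrite /is_hermitian /adj => M_herm.
rewrite linearB map_mxB /= M_herm tr_scalar_mx map_scalar_mx /=.
by congr (_ - _%:M); exact: conjc_real.
Qed.

Lemma projP_adj m : (projP R m) ^t* = projP R m.
Proof.
by rewrite /projP tr_block_mx map_block_mx !trmx0 tr_scalar_mx !map_mx0 map_scalar_mx rmorph1.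
Qed.

Lemma projQ_adj m : (projQ R m) ^t* = projQ R m.
Proof.
by rewrite /projQ tr_block_mx map_block_mx !trmx0 tr_scalar_mx !map_mx0 map_scalar_mx rmorph1.
Qed.

Lemma projP_add_projQ m : projP R m + projQ R m = 1%:M.
Proof. by rewrite /projP /projQ add_block_mx !addr0 !add0r -scalar_mx_block. Qed.

Lemma localizer_sub_adj d m n (G : 'I_d -> 'M[C]_(m + m)) (A : 'I_d -> 'M[C]_n)
    (B : 'M[C]_n) (lam : 'I_d -> R) (nu : C) :
  (forall i, is_hermitian (G i)) -> (forall k, is_hermitian (A k)) ->
  localizer G A B lam nu - adj (localizer G A B lam nu)
    = ((B - nu%:M) - adj (B - nu%:M)) *t (1%:M : 'M_(m + m)).
Proof.
move=> G_herm A_herm; rewrite /localizer /adj.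
have G_adj k : (G k) ^t* = G k := G_herm k.
have A_adj k : (A k - (lam k)%:C%:M) ^t* = A k - (lam k)%:C%:M :=
  hermitian_subr_real_scalar (lam k) (A_herm k).
set S := \sum_(i < d) _; move: (B - nu%:M) => Bn.
have S_herm : S ^t* = S.
  rewrite /S !raddf_sum; apply: eq_bigr => k _ /=.
  by rewrite adj_tensmx A_adj G_adj.
rewrite !linearB !linearD !map_mxB !map_mxD /= S_herm !adj_tensmx projP_adj projQ_adj.
rewrite trmxCK -projP_add_projQ.
clear S_herm; move: S (projP R m) (projQ R m) (Bn ^t*) => S P Q Y.
by apply/matrixP => i j; rewrite !mxE; ring.
Qed.

(** * Comparing the two gaps *)

Lemma min_abs_re_spec_le p (M : 'M[C]_p) z :
  eigenvalue M z -> min_abs_re_spec M <= `|Re z|.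
Proof. by move=> Mz; apply: ge_inf; [exists 0 => _ [y _ <-] | exists z]. Qed.

Lemma le_min_abs_re_spec p (M : 'M[C]_p) c : (0 < p)%N ->
  (forall z, eigenvalue M z -> c <= `|Re z|) -> c <= min_abs_re_spec M.
Proof.
move=> p_gt0 c_le; have [z Mz] := eigenvalue_closed M p_gt0.
by apply: lb_le_inf => [|_ [y My <-]]; [exists `|Re z|, z | exact: c_le].
Qed.

Lemma sigma_min_le p (M : 'M[C]_p) w :
  eigenvalue (adj M *m M) w -> sigma_min M <= Num.sqrt (Re w).
Proof.
by move=> Mw; apply: ge_inf; [exists 0 => _ [y _ <-]; exact: sqrtr_ge0 | exists w].
Qed.

Lemma le_sigma_min p (M : 'M[C]_p) c : (0 < p)%N ->
  (forall w, eigenvalue (adj M *m M) w -> c <= Num.sqrt (Re w)) -> c <= sigma_min M.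
Proof.
move=> p_gt0 c_le; have [w Mw] := eigenvalue_closed (adj M *m M) p_gt0.
by apply: lb_le_inf => [|_ [y My <-]]; [exists (Num.sqrt (Re w)), w | exact: c_le].
Qed.

Lemma le_dev_normality p (M : 'M[C]_p) c : (0 < p)%N ->
  (forall U W D, [/\ Defs.unitary W, Defs.diagonal D, strictly_upper U &
     M = W *m (D + U) *m adj W] -> c <= opnorm U) ->
  c <= dev_normality M.
Proof.
move=> p_gt0 c_le; have [U [W [D schurM]]] := exists_schur_decomposition M p_gt0.
apply: lb_le_inf => [|_ [V [W' [D' schurV]] <-]]; last exact: c_le schurV.
by exists (opnorm U), U => //; exists W, D.
Qed.

Lemma dev_normality_ge0 p (M : 'M[C]_p) : (0 < p)%N -> 0 <= dev_normality M.
Proof. by move=> p_gt0; apply: le_dev_normality => // U *; exact: opnorm_ge0. Qed.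

Lemma sigma_min_le_normc_eigenvalue p (L : 'M[C]_p) z : (0 < p)%N ->
  eigenvalue L z -> sigma_min L <= normc z.
Proof.
move=> p_gt0 Lz; have [w Lw w_min] := min_eigenvalue_adj_mulmx L p_gt0.
have [x Lx x_neq0] := eigenvalue_col Lz.
have x_gt0 : 0 < vnorm x ^+ 2 by rewrite exprn_gt0 // vnorm_gt0.
apply: le_trans (sigma_min_le Lw) _.
rewrite -(ger0_norm (normc_ge0 z)) -sqrtr_sqr ler_sqrt ?sqr_ge0 //.
by rewrite -(ler_pM2r x_gt0) -exprMn -vnormZ -Lx w_min.
Qed.

Lemma le_sigma_min_vnorm p (L : 'M[C]_p) c : (0 < p)%N ->
  (forall x, c * vnorm x <= vnorm (L *m x)) -> c <= sigma_min L.
Proof.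
move=> p_gt0 c_le; apply: le_sigma_min => // w /eigenvalue_adj_mulmx [x Lx x_neq0].
have x_gt0 : 0 < vnorm x by rewrite vnorm_gt0.
have Lx_eq : vnorm (L *m x) = vnorm x * Num.sqrt (Re w).
  rewrite -(ger0_norm (vnorm_ge0 (L *m x))) -sqrtr_sqr Lx mulrC sqrtrM ?sqr_ge0 //.
  by rewrite sqrtr_sqr ger0_norm ?vnorm_ge0.
by rewrite -(ler_pM2l x_gt0) -Lx_eq mulrC c_le.
Qed.

Lemma sigma_min_le_min_abs_re_spec p (L : 'M[C]_p) c : (0 < p)%N ->
  (forall y, vnorm ((L - L ^t*) *m y) <= c * vnorm y) ->
  sigma_min L <= min_abs_re_spec L + c.
Proof.
move=> p_gt0 skew_le; rewrite -lerBlDr; apply: le_min_abs_re_spec => // z Lz.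
have := sigma_min_le_normc_eigenvalue p_gt0 Lz; have := normc_le_Re_Im z.
have := Im_eigenvalue_le Lz skew_le; have := normr_ge0 (Im z); lra.
Qed.

Lemma min_abs_re_spec_le_schur p (L W D U : 'M[C]_p) : (0 < p)%N ->
  [/\ Defs.unitary W, Defs.diagonal D, strictly_upper U & L = W *m (D + U) *m adj W] ->
  min_abs_re_spec L <= sigma_min L + opnorm U.
Proof.
move=> p_gt0 [W_unitary D_diag U_upper ->].
have [k Dk_le] := diagonal_min_entry p_gt0 D_diag.
have DU_trig (i j : 'I_p) : (j < i)%N -> (D + U) i j = 0.
  move=> ji; rewrite mxE (U_upper i j (ltnW ji)) D_diag ?addr0 //.
  by rewrite -val_eqE /= gtn_eqF.
have DUkk : (D + U) k k = D k k by rewrite mxE U_upper // addr0.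
have := min_abs_re_spec_le (eigenvalue_conj_upper_trig k W_unitary DU_trig).
rewrite DUkk => /le_trans/(_ (Re_le_normc _)) Dk_ge.
suff : normc (D k k) - opnorm U <= sigma_min (W *m (D + U) *m adj W) by lra.
apply: le_sigma_min_vnorm => // x; set y := adj W *m x.
have WtW : W ^t* *m W = 1%:M by exact: unitarymx_tC.
have -> : vnorm (W *m (D + U) *m adj W *m x) = vnorm ((D + U) *m y).
  by rewrite -!mulmxA vnorm_isometry.
have <- : vnorm y = vnorm x.
  by rewrite vnorm_isometry // /adj trmxCK; apply/unitarymxP.
have : vnorm (D *m y) <= vnorm ((D + U) *m y) + vnorm (U *m y).
  rewrite -[D *m y](addrK (U *m y)) -mulmxDl.
  by apply: le_trans (vnormD _ _) _; rewrite vnormN.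
have := Dk_le y; have := vnorm_mulmx_le U y; rewrite mulrBl; lra.
Qed.

Lemma min_abs_re_spec_le_dev p (L : 'M[C]_p) : (0 < p)%N ->
  min_abs_re_spec L <= sigma_min L + dev_normality L.
Proof.
move=> p_gt0; rewrite addrC -lerBlDr; apply: le_dev_normality => // U W D schurL.
by rewrite lerBlDr addrC; exact: min_abs_re_spec_le_schur schurL.
Qed.

End SpectralLocalizer.

Theorem mainTheorem11 (R : realType) (n d m : nat) (n_gt0 : (0 < n)%N)
  (d_gt0 : (0 < d)%N) (m_gt0 : (0 < m)%N)
  (G : 'I_d -> 'M[R[i]]_(m + m)) (HG : clifford_rep G)
  (A : 'I_d -> 'M[R[i]]_n) (HA : forall k, is_hermitian (A k))
  (B : 'M[R[i]]_n) (lam : 'I_d -> R) (nu : R[i]) :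
  `| clifford_linear_gap G A B lam nu - clifford_radial_gap G A B lam nu |
    <= Num.sqrt (n * (m + m))%:R * opnorm ((B - nu%:M) - adj (B - nu%:M))
       + dev_normality (localizer G A B lam nu).
Proof.
case: HG => G_herm _; rewrite /clifford_linear_gap /clifford_radial_gap.
set L := localizer G A B lam nu; set c := Num.sqrt _ * _.
have N_gt0 : (0 < n * (m + m))%N by rewrite muln_gt0 n_gt0 addn_gt0 m_gt0.
have c_ge0 : 0 <= c by rewrite mulr_ge0 ?sqrtr_ge0 ?opnorm_ge0.
have skew_le y : vnorm ((L - adj L) *m y) <= c * vnorm y.
  rewrite localizer_sub_adj // /c.
  by apply: le_trans (vnorm_tensmx1_le _ _) _; rewrite mulrA.
have := sigma_min_le_min_abs_re_spec N_gt0 skew_le.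
have := min_abs_re_spec_le_dev L N_gt0; have := dev_normality_ge0 L N_gt0.
by rewrite ler_norml => *; apply/andP; split; lra.
Qed.
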